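(* Let $b,n,c$ be positive integers with $2\leqslant 2b\leqslant n$, and let $\Gamma$ be an abelian group of order $2nbc$. If $\Gamma$ contains an element of order $n$, then there exists a diagonal $\mathrm{MRS}_\Gamma(n;2b;c)$. In particular, this holds if $n$ divides the exponent of $\Gamma$.
   Context: For positive integers $m,n,s,k,c$ and an abelian group $\Gamma$ of order $nkc$, an $\mathrm{MRS}_\Gamma(m,n;s,k;c)$ is a set of $c$ partially filled $m\times n$ arrays (some cells may be empty) with entries in $\Gamma$ such that: every element of $\Gamma$ appears exactly once and in a unique array; in every array each row contains exactly $s$ filled cells and each column contains exactly $k$ filled cells; and there exist $\omega,\delta\in\Gamma$ such that in every array each row sum is $\omega$ and each column sum is $\delta$. $\mathrm{MRS}_\Gamma(n;k;c)$ denotes $\mathrm{MRS}_\Gamma(n,n;k,k;c)$. In an $n\times n$ array, for $0\leqslant \ell\leqslant n-1$ the diagonal $D_\ell$ is the set of cells $(i,j)$ with $j-i\equiv \ell\pmod n$. An $\mathrm{MRS}_\Gamma(n;k;c)$ is diagonal if, in each of its arrays, the filled cells are exactly the cells of $k$ consecutive diagonals $D_{t},\ldots,D_{t+k-1}$ (indices modulo $n$). *)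

From mathcomp Require Import all_boot all_order all_fingroup all_solvable.
Set Implicit Arguments. Unset Strict Implicit. Unset Printing Implicit Defensive.
Import GroupScope.
Local Open Scope group_scope.

(* A (finite) abelian group Gamma is modelled as a finGroupType gT with
   [set: gT] abelian; the group law is written multiplicatively, so the
   "sum" of entries is the group product (order irrelevant by commutativity)
   and the neutral element is 1.

   A family of c partially filled m x n arrays with entries in gT is a map
   A : 'I_c -> 'I_m -> 'I_n -> option gT; None = empty cell. *)

Definition cell_val (gT : finGroupType) (x : option gT) : gT := odflt 1 x.

Definition is_MRS (gT : finGroupType) (m n s k c : nat)
    (A : 'I_c -> 'I_m -> 'I_n -> option gT) : Prop :=
  (forall g : gT,
      #|[set t : 'I_c * 'I_m * 'I_n | A t.1.1 t.1.2 t.2 == Some g]| = 1%N)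
  /\ (forall (a : 'I_c) (i : 'I_m), #|[set j : 'I_n | A a i j != None]| = s)
  /\ (forall (a : 'I_c) (j : 'I_n), #|[set i : 'I_m | A a i j != None]| = k)
  /\ (exists omega delta : gT,
        (forall (a : 'I_c) (i : 'I_m), \prod_(j < n) cell_val (A a i j) = omega)
        /\ (forall (a : 'I_c) (j : 'I_n), \prod_(i < m) cell_val (A a i j) = delta)).

(* Diagonal D_l = cells (i,j) with j - i = l (mod n).  The filled cells of
   array a are exactly those of D_t, ..., D_{t+k-1} (indices mod n), i.e.
   j = i + t + l (mod n) for some 0 <= l < k. *)
Definition is_diagonal_filling (gT : finGroupType) (n k c : nat)
    (A : 'I_c -> 'I_n -> 'I_n -> option gT) : Prop :=
  forall a : 'I_c, exists t : 'I_n, forall i j : 'I_n,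
    (A a i j != None) = [exists l : 'I_k, (i + t + l) %% n == j :> nat].

Definition diagonal_MRS (gT : finGroupType) (n k c : nat) : Prop :=
  exists A : 'I_c -> 'I_n -> 'I_n -> option gT,
    @is_MRS gT n n k k c A /\ @is_diagonal_filling gT n k c A.

From HB Require Import structures.
From mathcomp Require Import all_boot all_order all_fingroup all_solvable ssralg zmodp.
From mathcomp Require Import zify.

Set Implicit Arguments. Unset Strict Implicit. Unset Printing Implicit Defensive.
Import GroupScope GRing.Theory.

(* Let H = <[x]>, of order n.  The quotient of Gamma by H has even order 2bc, so
   it contains a non-square W, and Q |-> W Q^-1 is a fixed-point-free involution
   on the cosets of H.  Picking one coset t_k H in each of its bc orbits and a
   lift w of W, every element of Gamma is uniquely t_k x^e or its partner
   w (t_k x^e)^-1.  Array a fills the diagonals D_0, ..., D_(2b-1): for p < b the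
   cell (i, i + p) holds t_(a,p) x^i and the cell (i, i + b + p) its partner.
   Each row then multiplies to w^b and, as the two partners in a column lie in
   rows b apart, each column multiplies to (w x^b)^b. *)

Lemma exists_nonsquare (G : finGroupType) :
  ~~ odd #|G| -> exists W : G, forall q : G, q * q != W.
Proof.
move=> evenG.
have /(Cauchy (isT : prime 2))[z _ oz] : 2 %| #|[set: G]| by rewrite cardsT dvdn2.
have sq_not_inj : ~ injective (fun q : G => q * q).
  move=> /(_ z 1); rewrite mulg1 -[z * z]/(z ^+ 2) -oz expg_order => /(_ erefl) z1.
  by move: oz; rewrite z1 order1.
suff /existsP[W /forallP nsq] : [exists W : G, [forall q, q * q != W]] by exists W.
apply: contraT; rewrite negb_exists => /forallP sq_onto.
have /image_injP sq_inj : #|[seq q * q | q : G]| == #|G|.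
  rewrite eqn_leq leq_image_card /=; apply/subset_leq_card/subsetP => W _.
  by have /forallPn[q /negbNE/eqP <-] := sq_onto W; apply: image_f.
by case: sq_not_inj => q q'; apply: sq_inj.
Qed.

Lemma involution_transversal (T K : finType) (s : T -> T) :
    involutive s -> (forall q, s q != q) -> #|T| = #|K|.*2 ->
  exists f : K -> T, injective f /\ forall k k', f k != s (f k').
Proof.
move=> s_inv s_fpf cardTK.
pose A := [set q | enum_rank q < enum_rank (s q)].
have A_s q : (s q \in A) = (q \notin A).
  rewrite !inE s_inv ltn_neqAle -leqNgt eq_sym.
  rewrite andb_idl // => _; apply: contraNneq (s_fpf q).
  by move=> /val_inj/enum_rank_inj qE; rewrite -qE.
have cardA : #|K| = #|A|.
  apply/eqP; rewrite -(eqn_pmul2l (isT : 0 < 2)) !mul2n -cardTK -addnn.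
  rewrite -{2}(card_imset A (can_inj s_inv)) -(cardsC A) eqn_add2l.
  apply/eqP/eq_card => q; rewrite in_setC.
  apply/idP/imsetP => [nAq|[q' Aq' ->]]; last by rewrite -A_s s_inv.
  by exists (s q); rewrite ?A_s ?s_inv.
exists (fun k => enum_val (cast_ord cardA (enum_rank k))); split.
  by move=> k k' /enum_val_inj/cast_ord_inj/enum_rank_inj.
move=> k k'; apply: contraTneq (enum_valP (cast_ord cardA (enum_rank k))) => ->.
by rewrite A_s negbK enum_valP.
Qed.

Lemma prod_cell_val_insub (gT : finGroupType) (m n : nat) (le_mn : m <= n)
    (F : 'I_n -> 'I_m -> gT) :
  \prod_(k < n) cell_val (omap (F k) (insub (val k))) =
  \prod_(l < m) F (widen_ord le_mn l) l.
Proof.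
transitivity (\prod_(k < n | k < m) cell_val (omap (F k) (insub (val k)))).
  rewrite [RHS]big_mkcond; apply: eq_bigr => k _.
  by case: ifP => // /negbT ge_m; rewrite insubN.
by rewrite big_ord_narrow; apply: eq_bigr => l _; rewrite /= valK.
Qed.

Lemma expg_ordD (gT : finGroupType) (x : gT) (n' : nat) (e e' : 'I_n'.+1) :
  #[x] = n'.+1 -> x ^+ (e + e')%R = x ^+ e * x ^+ e'.
Proof. by move=> ox; rewrite -expgD -(expg_mod_order x (e + e')) ox. Qed.

Lemma exists_order_dvd_exponent (gT : finGroupType) (G : {group gT}) (n : nat) :
  nilpotent G -> n %| exponent G -> exists2 x, x \in G & #[x] = n.
Proof.
move=> nilG; have [x Gx ->] := exponent_witness nilG => dvd_n_x.
exists (x ^+ (#[x] %/ n)); first exact: groupX.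
by rewrite orderXdiv ?dvdn_div // divnA // mulKn.
Qed.

Definition pair_entry (gT : finGroupType) (x w : gT) (K : finType) (t : K -> gT)
    (n : nat) (u : K * bool * 'I_n) : gT :=
  let g := t u.1.1 * x ^+ u.2 in if u.1.2 then w * g^-1 else g.
Arguments pair_entry {gT} x w {K} t n u.

Section AbelianGroup.
Variable gT : finGroupType.
Hypothesis cG : abelian [set: gT].

Lemma mulgC : commutative ( *%g : gT -> gT -> gT).
Proof. by move=> y z; apply/esym/(centsP cG); rewrite inE. Qed.
HB.instance Definition _ :=
  SemiGroup.isCommutativeLaw.Build gT ( *%g : gT -> gT -> gT) mulgC.

Lemma mulg_invC (g y v : gT) : g * y * (v * g^-1) = v * y.
Proof. by rewrite mulgC -mulgA mulKg. Qed.

Lemma pair_entry_bij (x : gT) (K : finType) (n : nat) :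
    #[x] = n -> #|gT| = (#|K| * n).*2 ->
  exists (w : gT) (t : K -> gT), bijective (pair_entry x w t n).
Proof.
move=> ox cardG.
have nH g : g \in 'N(<[x]>).
  by rewrite (subsetP (sub_abelian_norm cG (subsetT <[x]>))) ?inE.
have cardQ : #|{: coset_of <[x]>}| = #|K|.*2.
  rewrite -[LHS]cardsT -quotientT card_quotient ?(sub_abelian_norm cG) ?subsetT //.
  rewrite -divgS ?subsetT // cardsT cardG -orderE ox doubleMl mulnK //.
  by rewrite -ox order_gt0.
have cQ : abelian [set: coset_of <[x]>] by rewrite -quotientT quotient_abelian.
have /exists_nonsquare[W nsqW] : ~~ odd #|{: coset_of <[x]>}| by rewrite cardQ odd_double.
pose s q := W * q^-1.
have s_inv : involutive s.
  move=> q; rewrite /s invMg invgK -[RHS](mulKVg W); congr (_ * _).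
  by apply: (centsP cQ); rewrite inE.
have s_fpf q : s q != q by apply: contra (nsqW q) => /eqP/(canRL (mulgKV q)) ->.
have [tau [tau_inj tau_s]] := involution_transversal s_inv s_fpf cardQ.
exists (repr W), (fun k => repr (tau k)).
apply: inj_card_bij; last by rewrite cardG !card_prod card_bool card_ord -muln2 mulnAC.
have x_inj : injective (fun e : 'I_n => x ^+ e).
  by move=> e e' /eqP; rewrite eq_expg_mod_order ox !modn_small // => /eqP/val_inj.
have coset_entry k b e :
    coset <[x]> (pair_entry x (repr W) (fun k => repr (tau k)) n (k, b, e)) =
    (if b then s else id) (tau k).
  have coset_t : coset <[x]> (repr (tau k) * x ^+ e) = tau k.
    by rewrite morphM ?nH //= coset_reprK coset_id ?mem_cycle ?mulg1.
  case: b; rewrite /pair_entry /=; last exact: coset_t.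
  by rewrite morphM ?nH //= morphV ?nH //= coset_t coset_reprK.
move=> [[k b] e] [[k' b'] e'] E; have := congr1 (coset <[x]>) E; rewrite !coset_entry.
rewrite /pair_entry /= in E; case: b b' E => [] [] /= E.
- move=> /(can_inj s_inv)/tau_inj ek; subst k'.
  by move/mulgI/invg_inj/mulgI/x_inj: E ->.
- by move=> /esym/eqP; rewrite (negPf (tau_s _ _)).
- by move=> /eqP; rewrite (negPf (tau_s _ _)).
- by move=> /tau_inj ek; subst k'; move/mulgI/x_inj: E ->.
Qed.

Section DiagonalArray.
Variables (n' c m : nat).
Local Notation n := n'.+1.
Hypothesis le_mn : m <= n.
Local Notation widen := (widen_ord le_mn).
Variable E : 'I_c -> 'I_m -> 'I_n -> gT.
Hypothesis E_bij : bijective (fun u : 'I_c * 'I_m * 'I_n => E u.1.1 u.1.2 u.2).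
Variables omega delta : gT.
Hypothesis E_row : forall a i, \prod_(l < m) E a l i = omega.
Hypothesis E_col : forall a j, \prod_(l < m) E a l (j - widen l)%R = delta.

(* [E a l i] is placed in row [i] on the diagonal [D_l]. *)
Definition diag_array (a : 'I_c) (i j : 'I_n) : option gT :=
  omap (fun l => E a l i) (insub (val (j - i)%R)).

Lemma diag_array_filled a i j :
  (diag_array a i j != None) = [exists l : 'I_m, i + widen l == j]%R.
Proof.
rewrite /diag_array; case: insubP => [l _ vl | ge_m] /=.
  apply/esym/existsP; exists l.
  by rewrite (_ : widen l = j - i)%R ?subrKC //; apply: val_inj.
apply/esym/existsP => -[l /eqP ji]; move: ge_m.
by rewrite -ji [(i + _)%R]addrC addrK /= ltn_ord.
Qed.

Lemma widen_inj : injective widen.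
Proof. by move=> l l' /(congr1 val) /= /val_inj. Qed.

Lemma diag_array_row_card a i : #|[set j | diag_array a i j != None]| = m.
Proof.
have -> : [set j | diag_array a i j != None] = [set (i + widen l)%R | l : 'I_m].
  apply/setP => j; rewrite inE diag_array_filled.
  by apply/existsP/imsetP => [[l /eqP <-]|[l _ ->]]; exists l.
by rewrite card_imset ?card_ord // => l l' /addrI/widen_inj.
Qed.

Lemma diag_array_col_card a j : #|[set i | diag_array a i j != None]| = m.
Proof.
have -> : [set i | diag_array a i j != None] = [set (j - widen l)%R | l : 'I_m].
  apply/setP => i; rewrite inE diag_array_filled.
  by apply/existsP/imsetP => [[l /eqP <-]|[l _ ->]]; exists l; rewrite ?addrK ?subrK.
by rewrite card_imset ?card_ord // => l l' /subrI/widen_inj.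
Qed.

Lemma diag_array_row_prod a i : \prod_(j < n) cell_val (diag_array a i j) = omega.
Proof.
rewrite (reindex_inj (addrI i)) -[RHS](E_row a i).
rewrite -(prod_cell_val_insub le_mn (fun _ l => E a l i)).
by apply: eq_bigr => l _; rewrite /diag_array [(i + l)%R]addrC addrK.
Qed.

Lemma diag_array_col_prod a j : \prod_(i < n) cell_val (diag_array a i j) = delta.
Proof.
rewrite (reindex_inj (subrI j)) -[RHS](E_col a j).
rewrite -(prod_cell_val_insub le_mn (fun k l => E a l (j - k)%R)).
by apply: eq_bigr => l _; rewrite /diag_array subKr.
Qed.

Lemma diag_array_eq a i j a' l' i' :
  (diag_array a i j == Some (E a' l' i')) = ((a, i, j) == (a', i', i' + widen l')%R).
Proof.
have E_inj l : E a l i = E a' l' i' -> (a, l, i) = (a', l', i').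
  exact: (@bij_inj _ _ _ E_bij (a, l, i) (a', l', i')).
rewrite /diag_array; case: insubP => [l _ vl | ge_m] /=.
  apply/eqP/eqP => [[/E_inj [-> <- <-]] | [<- <- ji]].
    by congr (_, _, _); rewrite (_ : widen l = j - i)%R ?subrKC //; apply: val_inj.
  by congr Some; congr E; apply: val_inj; rewrite vl ji [(i + _)%R]addrC addrK.
apply/esym/eqP => -[_ ii' ji]; move: ge_m.
by rewrite ji ii' [(i' + _)%R]addrC addrK /= ltn_ord.
Qed.

Lemma diag_array_once g :
  #|[set u : 'I_c * 'I_n * 'I_n | diag_array u.1.1 u.1.2 u.2 == Some g]| = 1%N.
Proof.
have [E' _ EK] := E_bij; move: (EK g); case: (E' g) => [[a l] i] /= <-.
rewrite (_ : [set u | _] = [set (a, i, i + widen l)%R]) ?cards1 //.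
by apply/setP => -[[a' i'] j']; rewrite !inE diag_array_eq.
Qed.

Lemma diag_array_diagonal : is_diagonal_filling m diag_array.
Proof.
move=> a; exists ord0 => i j; rewrite diag_array_filled addn0.
by apply: eq_existsb => l; rewrite -val_eqE.
Qed.

Lemma diagonal_MRS_of_entries : diagonal_MRS gT n m c.
Proof.
exists diag_array; split; last exact: diag_array_diagonal.
split; first exact: diag_array_once.
split; first exact: diag_array_row_card.
split; first exact: diag_array_col_card.
by exists omega, delta; split; [exact: diag_array_row_prod | exact: diag_array_col_prod].
Qed.

End DiagonalArray.

Section Construction.
Variables (n' b c : nat) (x w : gT) (t : 'I_c * 'I_b -> gT).
Local Notation n := n'.+1.
Hypotheses (ox : #[x] = n) (le_bbn : b + b <= n).
Hypothesis t_bij : bijective (pair_entry x w t n).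

Definition split_index (a : 'I_c) (l : 'I_(b + b)) (i : 'I_n) :
    'I_c * 'I_b * bool * 'I_n :=
  match split l with inl p => (a, p, false, i) | inr p => (a, p, true, i) end.

Lemma split_index_bij :
  bijective (fun u : 'I_c * 'I_(b + b) * 'I_n => split_index u.1.1 u.1.2 u.2).
Proof.
exists (fun v => (v.1.1.1, unsplit (if v.1.2 then inr v.1.1.2 else inl v.1.1.2), v.2)).
  by move=> [[a l] i]; rewrite /= /split_index; case: split_ordP => p ->.
by move=> [[[a p] []] i]; rewrite /split_index /= ?(unsplitK (inl p)) ?(unsplitK (inr p)).
Qed.

Definition diag_entry a l i := pair_entry x w t n (split_index a l i).

Lemma pair_entry_mul k (e e' : 'I_n) :
  pair_entry x w t n (k, false, e) * pair_entry x w t n (k, true, e') =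
  w * x ^+ (e - e')%R.
Proof.
have -> : pair_entry x w t n (k, false, e) = t k * x ^+ e' * x ^+ (e - e')%R.
  by rewrite -mulgA -expg_ordD // subrKC.
exact: mulg_invC.
Qed.

Lemma diag_entry_row a i : \prod_(l < b + b) diag_entry a l i = \prod_(p < b) w.
Proof.
rewrite big_split_ord /= -big_split; apply: eq_bigr => p _.
rewrite /diag_entry /split_index (unsplitK (inl p)) (unsplitK (inr p)) /=.
by rewrite pair_entry_mul subrr mulg1.
Qed.

Lemma widen_rshift p :
  widen_ord le_bbn (rshift b p) = (widen_ord le_bbn (lshift b p) + inZp b)%R.
Proof.
have lt_pb := ltn_ord p; have lt_bn : b < n by lia.
have lt_pbn : p + b < n by lia.
by apply: val_inj; rewrite /= (modn_small lt_bn) (modn_small lt_pbn) addnC.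
Qed.

Lemma diag_entry_col a j :
  \prod_(l < b + b) diag_entry a l (j - widen_ord le_bbn l)%R =
  \prod_(p < b) (w * x ^+ (inZp b : 'I_n)).
Proof.
rewrite big_split_ord /= -big_split; apply: eq_bigr => p _.
rewrite /diag_entry /split_index (unsplitK (inl p)) (unsplitK (inr p)) /= pair_entry_mul.
by rewrite widen_rshift opprB addrC subrKA addrC addKr.
Qed.

Lemma diagonal_MRS_of_pairing : diagonal_MRS gT n (b + b) c.
Proof.
apply: (diagonal_MRS_of_entries (E := diag_entry)) diag_entry_row diag_entry_col.
exact: bij_comp t_bij split_index_bij.
Qed.

End Construction.

End AbelianGroup.

Theorem corollary5p7 (gT : finGroupType) (b n c : nat) :
  (0 < b)%N -> (0 < n)%N -> (0 < c)%N -> (2 <= 2 * b <= n)%N ->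
  abelian [set: gT] ->
  #|gT| = (2 * n * b * c)%N ->
  ((exists x : gT, #[x]%g = n) -> diagonal_MRS gT n (2 * b) c)
  /\ ((n %| exponent [set: gT])%N -> diagonal_MRS gT n (2 * b) c).
Proof.
move=> _ n_gt0 _ /andP[_ le_2b_n] cG cardG.
have of_order : (exists x : gT, #[x] = n) -> diagonal_MRS gT n (2 * b) c.
  case: n n_gt0 le_2b_n cardG => // n' _ le_2b_n cardG [x ox].
  have cardK : #|gT| = (#|{: 'I_c * 'I_b}| * n'.+1).*2.
    by rewrite cardG card_prod !card_ord; nia.
  have [w [t t_bij]] := pair_entry_bij cG ox cardK.
  rewrite mul2n -addnn in le_2b_n *.
  exact: diagonal_MRS_of_pairing ox le_2b_n t_bij.
split=> // /(exists_order_dvd_exponent (abelian_nil cG))[x _ ox].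
by apply: of_order; exists x.
Qed.
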